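(* Let $\mathfrak{g}$ be the real Lie algebra whose dual has a basis $e^1,\dots,e^6$ with $de^1=de^2=de^3=de^4=0$, $de^5=e^1\wedge e^3+e^4\wedge e^2$, $de^6=e^1\wedge e^4+e^2\wedge e^3$. Let $\omega^1=e^1+ie^2$, $\omega^2=e^3+ie^4$, $\omega^3=e^5+ie^6$, and let $J_1$ be the complex structure on $\mathfrak{g}$ whose space of $(1,0)$-forms is $\langle\omega^1,\overline{\omega^2},\overline{\omega^3}\rangle$. Then the element $\theta\in\mathrm{Hom}(\Lambda^{1,0},\Lambda^{0,1})$ defined by $\theta(\omega^1)=\omega^3$, $\theta(\overline{\omega^2})=0$, $\theta(\overline{\omega^3})=0$ satisfies $\bar\partial\theta=0$, but $\theta$ is not tangent to $\mathcal{C}(\mathfrak{g})$ at $J_1$ (there is no differentiable path in $\mathcal{C}(\mathfrak{g})$ through $J_1$ with tangent vector $\theta$).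
   Context: $\mathcal{C}(\mathfrak{g})$ is the set of complex structures on $\mathfrak{g}$, i.e. linear $J$ with $J^2=-1$ and $[JX,JY]=[X,Y]+J[JX,Y]+J[X,JY]$; $d\alpha(X,Y)=-\alpha([X,Y])$ extended complex-linearly. Relative to $J_1$, $\Lambda^{1,0}=\langle\omega^1,\overline{\omega^2},\overline{\omega^3}\rangle$ and $\Lambda^{0,1}=\overline{\Lambda^{1,0}}$. Each complex structure $J$ is identified with its space of $(1,0)$-forms, a point of the Grassmannian of complex $3$-planes in $\mathfrak{g}^*_{\mathbb{C}}$; tangent vectors at $J$ are identified with $\mathrm{Hom}(\Lambda^{1,0},\Lambda^{0,1})$ via: if $\{\eta^1,\eta^2,\eta^3\}$ is a basis of $\Lambda^{1,0}$ and $\tau^i(t)\in\Lambda^{1,0}$ with $\tau^i(0)=0$, $\dot\tau^i(0)=\sigma^i$, the path $\langle\eta^i+\overline{\tau^i(t)}\rangle$ has tangent vector $\eta^i\mapsto\overline{\sigma^i}$. For $\theta\in\mathrm{Hom}(\Lambda^{1,0},\Lambda^{0,1})$, $(\bar\partial\theta)(\eta)=\bar\partial(\theta\eta)-\theta(\bar\partial\eta)$, where $\bar\partial$ of a $(1,0)$-form is the $(1,1)$-component of its $d$, $\bar\partial$ of a $(0,1)$-form is the $(0,2)$-component of its $d$, and $\theta(\alpha\wedge\bar\beta)=\theta(\alpha)\wedge\bar\beta$ for $\alpha\in\Lambda^{1,0},\bar\beta\in\Lambda^{0,1}$. *)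

From HB Require Import structures.
From mathcomp Require Import all_boot all_order all_algebra.
From mathcomp Require Import all_classical all_reals all_analysis.
From mathcomp Require Import complex.
Set Implicit Arguments.
Unset Strict Implicit.
Unset Printing Implicit Defensive.
Import Order.TTheory GRing.Theory Num.Theory.
Local Open Scope ring_scope.

(*  Vectors of g (or g_C) are column vectors 'cV[K]_6 of coordinates in    *)
(*  the basis e_1..e_6 dual to e^1..e^6; 1-forms are row vectors 'rV[K]_6  *)
(*  of coordinates in e^1..e^6, alpha(X) = (alpha *m X) 0 0.               *)
(*  2-forms are 6x6 matrices beta with beta(X,Y) = (X^T *m beta *m Y) 0 0. *)
(*  (a /\ b)(X,Y) = a(X) b(Y) - a(Y) b(X).                                 *)

Definition ef (K : nzRingType) (n : nat) : 'rV[K]_6 := delta_mx 0 (inord n.-1).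

Definition wedge (K : comNzRingType) (a b : 'rV[K]_6) : 'M[K]_6 :=
  a^T *m b - b^T *m a.

Definition de (K : comNzRingType) (n : nat) : 'M[K]_6 :=
  if n == 5%N then wedge (ef K 1) (ef K 3) + wedge (ef K 4) (ef K 2)
  else if n == 6%N then wedge (ef K 1) (ef K 4) + wedge (ef K 2) (ef K 3)
  else 0.

(* The Lie bracket of g (and of its complexification), determined by
   d alpha (X,Y) = - alpha([X,Y]):   e^k([X,Y]) = - de^k(X,Y). *)
Definition brk (K : comNzRingType) (X Y : 'cV[K]_6) : 'cV[K]_6 :=
  \col_(k < 6) - (X^T *m de K k.+1 *m Y) 0 0.

Definition d1 (K : comNzRingType) (a : 'rV[K]_6) : 'M[K]_6 :=
  \matrix_(i < 6, j < 6) - (a *m brk (delta_mx i 0) (delta_mx j 0)) 0 0.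

Definition is_complex_structure (R : realType) (J : 'M[R]_6) : Prop :=
  J *m J = - 1%:M /\
  forall X Y : 'cV[R]_6,
    brk (J *m X) (J *m Y) = brk X Y + J *m brk (J *m X) Y + J *m brk X (J *m Y).

Definition iC (R : realType) : R[i] := Complex 0 1.
Definition toC (R : realType) (x : R) : R[i] := Complex x 0.

Definition is_form10 (R : realType) (J : 'M[R]_6) (a : 'rV[R[i]]_6) : bool :=
  a *m map_mx (@toC R) J == iC R *: a.

Definition conjf (R : realType) m n (a : 'M[R[i]]_(m, n)) : 'M[R[i]]_(m, n) :=
  map_mx (@conjc R) a.

Definition om1 (R : realType) : 'rV[R[i]]_6 := ef _ 1 + iC R *: ef _ 2.
Definition om2 (R : realType) : 'rV[R[i]]_6 := ef _ 3 + iC R *: ef _ 4.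
Definition om3 (R : realType) : 'rV[R[i]]_6 := ef _ 5 + iC R *: ef _ 6.

(* basis eta^1, eta^2, eta^3 = omega^1, conj omega^2, conj omega^3 of
   Lambda^{1,0} of J_1 *)
Definition eta (R : realType) (i : 'I_3) : 'rV[R[i]]_6 :=
  if (i : nat) == 0%N then om1 R
  else if (i : nat) == 1%N then conjf (om2 R) else conjf (om3 R).

Definition B10 (R : realType) : 'M[R[i]]_(3, 6) := \matrix_(i < 3) eta R i.
Definition B01 (R : realType) : 'M[R[i]]_(3, 6) := conjf (B10 R).

(* projections (acting on forms by right multiplication) of
   g*_C = Lambda^{1,0} (+) Lambda^{0,1} onto each summand *)
Definition P10 (R : realType) : 'M[R[i]]_6 := proj_mx <<B10 R>>%MS <<B01 R>>%MS.
Definition P01 (R : realType) : 'M[R[i]]_6 := proj_mx <<B01 R>>%MS <<B10 R>>%MS.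

Definition comp11 (R : realType) (g : 'M[R[i]]_6) : 'M[R[i]]_6 :=
  (P10 R)^T *m g *m P01 R + (P01 R)^T *m g *m P10 R.
Definition comp02 (R : realType) (g : 'M[R[i]]_6) : 'M[R[i]]_6 :=
  (P01 R)^T *m g *m P01 R.

Definition dbar10 (R : realType) (a : 'rV[R[i]]_6) := comp11 (d1 a).
Definition dbar01 (R : realType) (b : 'rV[R[i]]_6) := comp02 (d1 b).

(* An element of Hom(Lambda^{1,0}, Lambda^{0,1}) given by the images
   th i = theta(eta^i) of the basis; thmx th is the matrix of the linear
   map alpha |-> theta(alpha P10) on all of g*_C (right multiplication),
   which agrees with theta on Lambda^{1,0}. *)
Definition thmx (R : realType) (th : 'I_3 -> 'rV[R[i]]_6) : 'M[R[i]]_6 :=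
  P10 R *m pinvmx (B10 R) *m \matrix_(i < 3) th i.

(* extension of theta to Lambda^{1,1} = Lambda^{1,0} (x) Lambda^{0,1}:
   theta(alpha /\ conj beta) = theta(alpha) /\ conj beta *)
Definition theta11 (R : realType) (th : 'I_3 -> 'rV[R[i]]_6) (g : 'M[R[i]]_6) :=
  (thmx th)^T *m ((P10 R)^T *m g *m P01 R) + ((P01 R)^T *m g *m P10 R) *m thmx th.

Definition dbar_hom (R : realType) (th : 'I_3 -> 'rV[R[i]]_6) (a : 'rV[R[i]]_6) :=
  dbar01 (a *m thmx th) - theta11 th (dbar10 a).

(* th (as an element of Hom(Lambda^{1,0},Lambda^{0,1}), th i = theta(eta^i))
   is tangent to C(g) at J_1: there is a path t |-> J t in C(g), defined for
   |t| < eps, whose space of (1,0)-forms is spanned by eta^i + conj(tau^i(t))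
   with tau^i(t) in Lambda^{1,0}, tau^i(0) = 0, tau^i differentiable at 0 with
   derivative sigma^i, and conj(sigma^i) = theta(eta^i). *)
Definition tangent_at_J1 (R : realType) (th : 'I_3 -> 'rV[R[i]]_6) : Prop :=
  exists (eps : R) (J : R -> 'M[R]_6) (tau : 'I_3 -> R -> 'rV[R[i]]_6)
         (sigma : 'I_3 -> 'rV[R[i]]_6),
    [/\ 0 < eps,
        forall i, tau i 0 = 0,
        forall i (t : R), `|t| < eps -> (tau i t <= B10 R)%MS &
        forall i (k : 'I_6),
          is_derive (0 : R) (1 : R) (fun t => complex.Re (tau i t 0 k))
                    (complex.Re (sigma i 0 k)) /\
          is_derive (0 : R) (1 : R) (fun t => complex.Im (tau i t 0 k))
                    (complex.Im (sigma i 0 k))] /\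
    (forall t : R, `|t| < eps ->
          is_complex_structure (J t) /\
          forall a : 'rV[R[i]]_6,
            is_form10 (J t) a = (a <= \matrix_(i < 3) (eta R i + conjf (tau i t)))%MS) /\
    (forall i, conjf (sigma i) = th i).

Definition theta0 (R : realType) (i : 'I_3) : 'rV[R[i]]_6 :=
  if (i : nat) == 0%N then om3 R else 0.

From Pilot Require Import Defs.
From HB Require Import structures.
From mathcomp Require Import all_boot all_order all_algebra.
From mathcomp Require Import all_classical all_reals all_analysis.
From mathcomp Require Import complex.
From mathcomp Require Import ring lra.

(* With theta (omega^1) = omega^3 and theta vanishing on conj omega^2 and
   conj omega^3, dbar theta = 0 because d omega^3 = omega^1 /\ omega^2 has no
   (0,2)-part, while d (conj omega^3) = conj omega^1 /\ conj omega^2 is of type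
   (1,1) and theta only sees its (1,0)-factor conj omega^2, which it kills.

   A complex structure near J_1 has as (1,0)-forms the rows of B10 + A B01 for
   a 3x3 matrix A, and as (0,1)-vectors the columns of B10^T - B01^T A (since
   B10 B10^T = 0 and B10 B01^T = 2).  Integrability says that the first
   (1,0)-form alpha kills the bracket of the last two (0,1)-vectors; since
   d alpha = A_02 omega^1 /\ omega^2, that bracket pairs to -4 A_02^2, so
   A_02 = 0.  Along a path with tangent theta, A_02(t) is the e^5-coefficient of
   conj tau^1(t), hence identically 0, whereas theta(omega^1) = omega^3 forces
   its derivative to be 1. *)

Set Implicit Arguments.
Unset Strict Implicit.
Unset Printing Implicit Defensive.

Import Order.TTheory GRing.Theory Num.Theory.
Local Open Scope ring_scope.

(* [ix5], [ix6] index the coefficients of e^5, e^6 (indices start at 0);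
   [j1], [j2] index the second and third basis forms. *)
Definition ix5 : 'I_6 := Ordinal (isT : (4 < 6)%N).
Definition ix6 : 'I_6 := Ordinal (isT : (5 < 6)%N).
Definition j1 : 'I_3 := Ordinal (isT : (1 < 3)%N).
Definition j2 : 'I_3 := Ordinal (isT : (2 < 3)%N).

Lemma mul_row_col (K : nzRingType) m n p (A : 'M[K]_(m, n)) (B : 'M[K]_(n, p)) i j :
  (row i A *m col j B) 0 0 = (A *m B) i j.
Proof. by rewrite !mxE; apply: eq_bigr => k _; rewrite !mxE. Qed.

Lemma mxDE (V : nmodType) m n (A B : 'M[V]_(m, n)) i j :
  (A + B) i j = A i j + B i j.
Proof. by rewrite mxE. Qed.

Lemma brkE (K : comNzRingType) (X Y : 'cV[K]_6) k :
  brk X Y k 0 = - (X^T *m de K k.+1 *m Y) 0 0.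
Proof. by rewrite mxE. Qed.

Lemma formDr (K : comNzRingType) n (a : 'rV[K]_n) (X Y : 'cV[K]_n) :
  (a *m (X + Y)) 0 0 = (a *m X) 0 0 + (a *m Y) 0 0.
Proof. by rewrite mulmxDr mxDE. Qed.

Lemma formZr (K : comNzRingType) n (a : 'rV[K]_n) c (X : 'cV[K]_n) :
  (a *m (c *: X)) 0 0 = c * (a *m X) 0 0.
Proof. by rewrite -scalemxAr mxE. Qed.

Lemma trmx11_mulE (K : comNzRingType) (u v : 'M[K]_1) : (u^T *m v) 0 0 = u 0 0 * v 0 0.
Proof. by rewrite mxE big_ord1 mxE. Qed.

Section StructureEquations.
Variable K : comNzRingType.
Implicit Types (a b : 'rV[K]_6) (X Y : 'cV[K]_6).

Lemma efE n k :
  (n < 6)%N -> ef K n.+1 0 k = (k == n :> nat)%:R :> K.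
Proof. by move=> lt_n6; rewrite /ef mxE /= -(inj_eq val_inj) /= inordK. Qed.

Lemma mxZE m n (c : K) (A : 'M[K]_(m, n)) i j :
  (c *: A) i j = c * A i j.
Proof. by rewrite mxE. Qed.

Lemma wedgeE a b i j : wedge a b i j = a 0 i * b 0 j - b 0 i * a 0 j.
Proof. by rewrite /wedge !mxE !big_ord1 !mxE. Qed.

Lemma wedgeZl c a b : wedge (c *: a) b = c *: wedge a b.
Proof. by rewrite /wedge linearZ /= -scalemxAl -scalemxAr scalerBr. Qed.

Lemma wedge0r a : wedge a 0 = 0.
Proof. by rewrite /wedge trmx0 mul0mx mulmx0 subrr. Qed.

Lemma mulmx_wedge n (P Q : 'M[K]_(6, n)) a b :
  P^T *m wedge a b *m Q = (a *m P)^T *m (b *m Q) - (b *m P)^T *m (a *m Q).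
Proof. by rewrite /wedge mulmxBr mulmxBl !trmx_mul !mulmxA. Qed.

Lemma wedge_apply a b (Z W : 'cV[K]_6) :
  (Z^T *m wedge a b *m W) 0 0 = (a *m Z) 0 0 * (b *m W) 0 0 - (b *m Z) 0 0 * (a *m W) 0 0.
Proof. by rewrite mulmx_wedge mxDE [X in _ + X]mxE !trmx11_mulE. Qed.

Lemma d1_sum a : d1 a = \sum_k a 0 k *: de K k.+1.
Proof.
apply/matrixP => i j; rewrite summxE mxE mxE -sumrN.
apply: eq_bigr => k _; rewrite brkE trmx_delta -rowE -colE !mxE; ring.
Qed.

Lemma d1_de a : d1 a = a 0 ix5 *: de K 5 + a 0 ix6 *: de K 6.
Proof.
rewrite d1_sum !big_ord_recl big_ord0 /de /= !scaler0 !add0r addr0.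
by congr (a 0 _ *: _ + a 0 _ *: _); apply: val_inj.
Qed.

Lemma de_wedge (j : K) : j * j = -1 ->
  de K 5 + j *: de K 6 = wedge (ef K 1 + j *: ef K 2) (ef K 3 + j *: ef K 4).
Proof.
move=> jj; apply/matrixP => p q; rewrite /de /=.
(* generalizing [wedge] keeps [mxDE] from unfolding it *)
move: wedgeE; move: (@wedge K) => W WE; rewrite !(mxDE, mxZE, WE) !efE //.
by ring: jj.
Qed.

Lemma form_brk (a : 'rV[K]_6) X Y :
  (a *m brk X Y) 0 0 = - (X^T *m d1 a *m Y) 0 0.
Proof.
rewrite d1_sum mulmx_sumr mulmx_suml summxE mxE -sumrN.
by apply: eq_bigr => k _; rewrite brkE -scalemxAr -scalemxAl mxZE mulrN.
Qed.

Lemma brkDl X1 X2 Y : brk (X1 + X2) Y = brk X1 Y + brk X2 Y.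
Proof. by apply/matrixP => k l; rewrite ord1 mxDE !brkE linearD /= !mulmxDl mxDE opprD. Qed.
Lemma brkZl c X Y : brk (c *: X) Y = c *: brk X Y.
Proof. by apply/matrixP => k l; rewrite ord1 mxZE !brkE linearZ /= -!scalemxAl mxZE mulrN. Qed.
Lemma brkDr X Y1 Y2 : brk X (Y1 + Y2) = brk X Y1 + brk X Y2.
Proof. by apply/matrixP => k l; rewrite ord1 mxDE !brkE mulmxDr mxDE opprD. Qed.
Lemma brkZr c X Y : brk X (c *: Y) = c *: brk X Y.
Proof. by apply/matrixP => k l; rewrite ord1 mxZE !brkE -scalemxAr mxZE mulrN. Qed.

Lemma map_brk (K' : comNzRingType) (f : {rmorphism K -> K'}) X Y :
  brk (map_mx f X) (map_mx f Y) = map_mx f (brk X Y).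
Proof.
have map_wedge a b : map_mx f (wedge a b) = wedge (map_mx f a) (map_mx f b).
  by rewrite /wedge map_mxB !map_mxM !map_trmx.
have map_de n : map_mx f (de K n) = de K' n.
  rewrite /de; case: ifP => _; last case: ifP => _;
  by rewrite ?map_mx0 // map_mxD !map_wedge /ef !map_delta_mx.
apply/matrixP => k l; rewrite ord1 [RHS]mxE !brkE rmorphN.
by rewrite -map_de map_trmx -!map_mxM mxE.
Qed.

End StructureEquations.

Lemma is_derive_locally0 (R : realType) (f : R -> R) (eps l : R) :
  0 < eps -> (forall t, `|t| < eps -> f t = 0) -> is_derive (0 : R) (1 : R) f l -> l = 0.
Proof.
move=> eps_gt0 f0 df.
have f_near0 : \forall t \near 0, f t = (fun=> 0 : R) t.
  by apply/nbhs_ballP; exists eps => // t; rewrite /ball /= sub0r normrN; exact: f0.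
have := @derive_val _ _ _ _ _ _ _ (near_eq_is_derive f_near0 df).
by rewrite derive_cst => <-.
Qed.

Section ComplexStructureJ1.
Variable R : realType.
Local Notation C := R[i].
Local Notation cR := (map_mx (real_complex R)).

Lemma iCiC : iC R * iC R = -1.
Proof. by apply/eqP; rewrite eq_complex /=; simpc. Qed.

Lemma conjc_iC : conjc (iC R) = - iC R.
Proof. by apply/eqP; rewrite eq_complex /=; simpc. Qed.

Lemma conjfK m n (A : 'M[C]_(m, n)) : conjf (conjf A) = A.
Proof. by apply/matrixP => i j; rewrite !mxE conjcK. Qed.

Lemma conjf_ef_iC n n' :
  conjf (ef C n + iC R *: ef C n') = ef C n + (- iC R) *: ef C n'.
Proof. by rewrite /conjf map_mxD map_mxZ /ef !map_delta_mx -conjc_iC. Qed.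

Lemma etaE (i : 'I_3) k : Defs.eta R i 0 k =
  if (i : nat) == 0%N then (k == 0%N :> nat)%:R + iC R * (k == 1%N :> nat)%:R
  else if (i : nat) == 1%N then (k == 2%N :> nat)%:R - iC R * (k == 3%N :> nat)%:R
  else (k == 4%N :> nat)%:R - iC R * (k == 5%N :> nat)%:R.
Proof.
rewrite /Defs.eta /om1 /om2 /om3 !conjf_ef_iC.
by case: ifP => _; last case: ifP => _; rewrite mxDE mxZE !efE // mulNr.
Qed.

Lemma conj_etaE (i : 'I_3) k : conjc (Defs.eta R i 0 k) =
  if (i : nat) == 0%N then (k == 0%N :> nat)%:R - iC R * (k == 1%N :> nat)%:R
  else if (i : nat) == 1%N then (k == 2%N :> nat)%:R + iC R * (k == 3%N :> nat)%:R
  else (k == 4%N :> nat)%:R + iC R * (k == 5%N :> nat)%:R.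
Proof.
have -> : conjc (Defs.eta R i 0 k) = conjf (Defs.eta R i) 0 k by rewrite mxE.
rewrite /Defs.eta; case: ifP => _; last case: ifP => _;
by rewrite ?conjfK /om1 /om2 /om3 ?conjf_ef_iC mxDE mxZE !efE // mulNr.
Qed.

Lemma B10E i k : B10 R i k = Defs.eta R i 0 k.
Proof. exact: mxE. Qed.

Lemma B01E i k : B01 R i k = conjc (Defs.eta R i 0 k).
Proof. by rewrite mxE B10E. Qed.

Lemma B10_mul_trB01 : B10 R *m (B01 R)^T = 2%:M.
Proof.
apply/matrixP => i j; rewrite !mxE !big_ord_recl big_ord0 !mxE !conj_etaE !etaE.
by case: i => [[|[|[|i]]] hi] //=; case: j => [[|[|[|j]]] hj] //=; ring: iCiC.
Qed.

Lemma B10_mul_trB10 : B10 R *m (B10 R)^T = 0.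
Proof.
apply/matrixP => i j; rewrite !mxE !big_ord_recl big_ord0 !mxE !etaE.
by case: i => [[|[|[|i]]] hi] //=; case: j => [[|[|[|j]]] hj] //=; ring: iCiC.
Qed.

Lemma B01_mul_trB01 : B01 R *m (B01 R)^T = 0.
Proof. by rewrite /B01 /conjf map_trmx -map_mxM B10_mul_trB10 map_mx0. Qed.

Lemma B01_mul_trB10 : B01 R *m (B10 R)^T = 2%:M.
Proof. by rewrite -[LHS]trmxK trmx_mul trmxK B10_mul_trB01 tr_scalar_mx. Qed.

Lemma two_neq0 : (2%:R : C) != 0.
Proof. by rewrite pnatr_eq0. Qed.

Lemma capmx_B10_B01 : (<<B10 R>> :&: <<B01 R>> = 0)%MS.
Proof.
apply/eqP; rewrite -submx0.
move: (capmxSl <<B10 R>> <<B01 R>>)%MS (capmxSr <<B10 R>> <<B01 R>>)%MS.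
rewrite !genmxE; move: (_ :&: _)%MS => X /submxP[s X_sB10] /submxP[r X_rB01].
have : X *m (B01 R)^T = 0 by rewrite X_rB01 -mulmxA B01_mul_trB01 mulmx0.
rewrite X_sB10 -mulmxA B10_mul_trB01 mul_mx_scalar => /eqP.
rewrite scaler_eq0 (negPf two_neq0) /= => /eqP s0.
by rewrite s0 mul0mx sub0mx.
Qed.

Lemma capmx_B01_B10 : (<<B01 R>> :&: <<B10 R>> = 0)%MS.
Proof. by rewrite capmxC capmx_B10_B01. Qed.

Lemma P10_B10 m (u : 'M[C]_(m, 6)) : (u <= B10 R)%MS -> u *m P10 R = u.
Proof. by move=> u10; apply: proj_mx_id capmx_B10_B01 _; rewrite genmxE. Qed.
Lemma P01_B10 m (u : 'M[C]_(m, 6)) : (u <= B10 R)%MS -> u *m P01 R = 0.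
Proof. by move=> u10; apply: proj_mx_0 capmx_B01_B10 _; rewrite genmxE. Qed.
Lemma P10_B01 m (u : 'M[C]_(m, 6)) : (u <= B01 R)%MS -> u *m P10 R = 0.
Proof. by move=> u01; apply: proj_mx_0 capmx_B10_B01 _; rewrite genmxE. Qed.
Lemma P01_B01 m (u : 'M[C]_(m, 6)) : (u <= B01 R)%MS -> u *m P01 R = u.
Proof. by move=> u01; apply: proj_mx_id capmx_B01_B10 _; rewrite genmxE. Qed.

Lemma row_free_B10 : row_free (B10 R).
Proof.
apply/row_freeP; exists ((2%:R)^-1 *: (B01 R)^T).
by rewrite -scalemxAr B10_mul_trB01 scale_scalar_mx mulVf // two_neq0.
Qed.

Lemma row_B10 i : row i (B10 R) = Defs.eta R i.
Proof. exact: rowK. Qed.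

Lemma row_B01 i : row i (B01 R) = conjf (Defs.eta R i).
Proof. by rewrite -map_row row_B10. Qed.

Lemma om1_row_B10 : om1 R = row 0 (B10 R).
Proof. by rewrite row_B10. Qed.

Lemma om2_row_B01 : om2 R = row j1 (B01 R).
Proof. by rewrite row_B01 conjfK. Qed.

Lemma conj_om2_row_B10 : conjf (om2 R) = row j1 (B10 R).
Proof. by rewrite row_B10. Qed.

Lemma om1_sub : (om1 R <= B10 R)%MS.
Proof. by rewrite om1_row_B10 row_sub. Qed.
Lemma conj_om2_sub : (conjf (om2 R) <= B10 R)%MS.
Proof. by rewrite conj_om2_row_B10 row_sub. Qed.
Lemma conj_om1_sub : (conjf (om1 R) <= B01 R)%MS.
Proof. by rewrite map_submx om1_sub. Qed.

Lemma om3_ix5 : om3 R 0 ix5 = 1.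
Proof. by rewrite mxDE mxZE !efE //= mulr0 addr0. Qed.

Lemma om3_ix6 : om3 R 0 ix6 = iC R.
Proof. by rewrite mxDE mxZE !efE //= mulr1 add0r. Qed.

Lemma mulmx_B10_ix5 m (u : 'M[C]_(m, 3)) k : (u *m B10 R) k ix5 = u k j2.
Proof.
rewrite mxE; under eq_bigr => j _ do rewrite B10E etaE.
rewrite !big_ord_recl big_ord0 /=.
by rewrite (_ : lift ord0 (lift ord0 ord0) = j2) //; [ring | apply: val_inj].
Qed.

Lemma mulmx_B10_ix6 m (u : 'M[C]_(m, 3)) k : (u *m B10 R) k ix6 = - (u k j2 * iC R).
Proof.
rewrite mxE; under eq_bigr => j _ do rewrite B10E etaE.
rewrite !big_ord_recl big_ord0 /=.
by rewrite (_ : lift ord0 (lift ord0 ord0) = j2) //; [ring | apply: val_inj].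
Qed.

Lemma mulmx_B01_ix5 m (u : 'M[C]_(m, 3)) k : (u *m B01 R) k ix5 = u k j2.
Proof.
rewrite mxE; under eq_bigr => j _ do rewrite B01E conj_etaE.
rewrite !big_ord_recl big_ord0 /=.
by rewrite (_ : lift ord0 (lift ord0 ord0) = j2) //; [ring | apply: val_inj].
Qed.

Lemma mulmx_B01_ix6 m (u : 'M[C]_(m, 3)) k : (u *m B01 R) k ix6 = u k j2 * iC R.
Proof.
rewrite mxE; under eq_bigr => j _ do rewrite B01E conj_etaE.
rewrite !big_ord_recl big_ord0 /=.
by rewrite (_ : lift ord0 (lift ord0 ord0) = j2) //; [ring | apply: val_inj].
Qed.

Lemma d1_form10 (a : 'rV[C]_6) c :
  a 0 ix5 = c -> a 0 ix6 = c * iC R -> d1 a = wedge (c *: om1 R) (om2 R).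
Proof.
by move=> a5 a6; rewrite d1_de a5 a6 -scalerA -scalerDr de_wedge ?iCiC // wedgeZl.
Qed.

Lemma d1_form01 (a : 'rV[C]_6) c :
  a 0 ix5 = c -> a 0 ix6 = - (c * iC R) ->
  d1 a = wedge (c *: conjf (om1 R)) (conjf (om2 R)).
Proof.
move=> a5 a6; rewrite d1_de a5 a6 -mulrN -scalerA -scalerDr de_wedge ?mulrNN ?iCiC //.
by rewrite wedgeZl /om1 /om2 !conjf_ef_iC.
Qed.

Lemma comp02_wedge u v : (u <= B10 R)%MS -> comp02 (wedge u v) = 0.
Proof. by move=> u10; rewrite /comp02 mulmx_wedge P01_B10 // trmx0 mul0mx linear0 subrr. Qed.

Lemma comp11_wedge u v :
  (u <= B01 R)%MS -> (v <= B10 R)%MS -> comp11 (wedge u v) = wedge u v.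
Proof.
move=> u01 v10; rewrite /comp11.
move: (P10_B01 u01) (P01_B01 u01) (P10_B10 v10) (P01_B10 v10).
move: (P10 R) (P01 R) => P Q uP uQ vP vQ.
by rewrite !mulmx_wedge uP uQ vP vQ trmx0 !mul0mx !linear0 sub0r addr0 addrC.
Qed.

Lemma theta11_wedge th u v : (u <= B01 R)%MS -> (v <= B10 R)%MS ->
  theta11 th (wedge u v) = wedge u (v *m thmx th).
Proof.
move=> u01 v10; rewrite /theta11; move: (thmx th) => T.
move: (P10_B01 u01) (P01_B01 u01) (P10_B10 v10) (P01_B10 v10).
move: (P10 R) (P01 R) => P Q uP uQ vP vQ.
rewrite !mulmx_wedge uP uQ vP vQ.
by rewrite trmx0 !mul0mx !linear0 sub0r addr0 mulmxN /wedge trmx_mul !mulmxA addrC.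
Qed.

Lemma mulmx_thmx th (s : 'rV[C]_3) :
  s *m B10 R *m thmx th = s *m \matrix_(i < 3) th i.
Proof. by rewrite /thmx 2!mulmxA P10_B10 ?submxMl // mulmxKp // row_free_B10. Qed.

Lemma mulmx_theta0 (s : 'rV[C]_3) : s *m \matrix_(i < 3) theta0 R i = s 0 0 *: om3 R.
Proof.
rewrite mulmx_sum_row !big_ord_recl big_ord0 !rowK /theta0 /= !scaler0 !addr0.
by congr (s 0 _ *: _); apply: val_inj.
Qed.

Lemma dbar_hom_theta0 a : (a <= B10 R)%MS -> dbar_hom (theta0 R) a = 0.
Proof.
case/submxP=> s ->.
have theta_a : s *m B10 R *m thmx (theta0 R) = s 0 0 *: om3 R.
  by rewrite mulmx_thmx mulmx_theta0.
have theta_conj_om2 : conjf (om2 R) *m thmx (theta0 R) = 0.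
  by rewrite conj_om2_row_B10 rowE mulmx_thmx mulmx_theta0 mxE scale0r.
rewrite /dbar_hom /dbar01 /dbar10 theta_a.
rewrite (@d1_form10 _ (s 0 0)) ?mxZE ?om3_ix5 ?om3_ix6 ?mulr1 //.
rewrite (@d1_form01 _ (s 0 j2)) ?mulmx_B10_ix5 ?mulmx_B10_ix6 //.
rewrite comp02_wedge ?scalemx_sub ?om1_sub //.
rewrite comp11_wedge ?theta11_wedge ?scalemx_sub ?conj_om1_sub ?conj_om2_sub //.
by rewrite theta_conj_om2 wedge0r subrr.
Qed.

Lemma is_form10E (J : 'M[R]_6) a : is_form10 J a = (a *m cR J == iC R *: a).
Proof. by rewrite /is_form10 (_ : map_mx _ J = cR J) //; apply/matrixP => i j; rewrite !mxE. Qed.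

Lemma mx_Re_Im m n (Z : 'M[C]_(m, n)) :
  Z = cR (map_mx (@complex.Re R) Z) + iC R *: cR (map_mx (@complex.Im R) Z).
Proof.
apply/matrixP => i j; rewrite mxDE mxZE !mxE.
case: (Z i j) => a b; apply/eqP; rewrite eq_complex /=.
by apply/andP; split; apply/eqP; simpc; ring.
Qed.

Lemma mx_Re_Im_inj m n (a b c d : 'M[R]_(m, n)) :
  cR a + iC R *: cR b = cR c + iC R *: cR d -> a = c /\ b = d.
Proof.
move/matrixP => abcd; split; apply/matrixP => i j; have := abcd i j;
rewrite !mxDE !mxZE !mxE => /eqP; rewrite eq_complex /= => /andP[/eqP Re_eq /eqP Im_eq].
  by move: Re_eq; simpc; lra.
by move: Im_eq; simpc; lra.
Qed.

Lemma eigen_miC_decomp n (J : 'M[R]_n) (Z : 'cV[C]_n) :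
  cR J *m Z = - iC R *: Z -> exists x, Z = cR x + iC R *: cR (J *m x).
Proof.
have [x [y ->]] : exists x y, Z = cR x + iC R *: cR y by do 2 eexists; exact: mx_Re_Im.
rewrite mulmxDr -scalemxAr -!map_mxM scalerDr scalerA mulNr iCiC opprK scale1r => JZ.
exists x; suff -> : J *m x = y by [].
have : cR (J *m x) + iC R *: cR (J *m y) = cR y + iC R *: cR (- x).
  by rewrite JZ map_mxN scalerN -scaleNr addrC.
by case/mx_Re_Im_inj.
Qed.

Lemma annihilator_forms10 (J : 'M[R]_6) (M : 'M[C]_(3, 6)) (Z : 'cV[C]_6) :
  J *m J = - 1%:M -> (forall a, is_form10 J a = (a <= M)%MS) -> M *m Z = 0 ->
  cR J *m Z = - iC R *: Z.
Proof.
move=> J2 forms MZ.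
have cJ2 : cR J *m cR J = - 1%:M by rewrite -map_mxM J2 map_mxN map_mx1.
have MJ : M *m cR J = iC R *: M.
  apply/row_matrixP => i; rewrite row_mul linearZ /=; apply/eqP.
  by rewrite -is_form10E forms row_sub.
pose Z' := cR J *m Z + iC R *: Z.
have JZ' : cR J *m Z' = iC R *: Z'.
  by rewrite mulmxDr mulmxA cJ2 mulNmx mul1mx -scalemxAr scalerDr scalerA iCiC scaleN1r addrC.
have MZ' : M *m Z' = 0.
  by rewrite mulmxDr mulmxA MJ -scalemxAl -scalemxAr MZ scaler0 addr0.
suff /eqP : Z' = 0 by rewrite addr_eq0 => /eqP ->; rewrite scaleNr.
apply/matrixP => k l; rewrite ord1 [RHS]mxE.
pose b : 'rV[C]_6 := delta_mx 0 k.
have /submxP[D a_DM] : (b - iC R *: (b *m cR J) <= M)%MS.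
  rewrite -forms is_form10E mulmxBl -scalemxAl -mulmxA cJ2 mulmxN mulmx1.
  by rewrite scalerN opprK scalerBr scalerA iCiC scaleN1r opprK addrC.
have : (b - iC R *: (b *m cR J)) *m Z' = 0 by rewrite a_DM -mulmxA MZ' mulmx0.
rewrite mulmxBl -scalemxAl -mulmxA JZ' -scalemxAr scalerA iCiC scaleN1r opprK.
move/matrixP/(_ 0 0); rewrite mxDE -rowE mxE [RHS]mxE -mulr2n -mulr_natl.
by move/eqP; rewrite mulf_eq0 (negPf two_neq0) => /eqP.
Qed.

Lemma form10_brk_eq0 (J : 'M[R]_6) (a : 'rV[C]_6) (Z W : 'cV[C]_6) :
  is_complex_structure J -> is_form10 J a ->
  cR J *m Z = - iC R *: Z -> cR J *m W = - iC R *: W -> (a *m brk Z W) 0 0 = 0.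
Proof.
move=> [_ integrable]; rewrite is_form10E => /eqP aJ.
move=> /eigen_miC_decomp[x ->] /eigen_miC_decomp[y ->].
rewrite brkDl brkZl !brkDr !brkZr !map_brk integrable !map_mxD !map_mxM.
rewrite !(formDr, formZr) !mulmxA aJ -!scalemxAl !mxZE.
by ring: iCiC.
Qed.

Lemma deformed_J1_coeff (J : 'M[R]_6) (A : 'M[C]_3) :
  is_complex_structure J ->
  (forall a, is_form10 J a = (a <= (B10 R + A *m B01 R)%R)%MS) -> A 0 j2 = 0.
Proof.
move=> cs forms; have [J2 _] := cs; set M := B10 R + A *m B01 R.
pose V := (B10 R)^T - (B01 R)^T *m A.
have B10V : B10 R *m V = (- 2%:R) *: A.
  by rewrite mulmxBr B10_mul_trB10 mulmxA B10_mul_trB01 mul_scalar_mx sub0r scaleNr.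
have B01V : B01 R *m V = 2%:M.
  by rewrite mulmxBr B01_mul_trB10 mulmxA B01_mul_trB01 mul0mx subr0.
have V01 j : cR J *m col j V = - iC R *: col j V.
  apply: annihilator_forms10 J2 forms _.
  by rewrite colE mulmxA mulmxDl B10V -mulmxA B01V mul_mx_scalar scaleNr addNr mul0mx.
have M0_10 : is_form10 J (row 0 M) by rewrite forms row_sub.
have := form10_brk_eq0 cs M0_10 (V01 j2) (V01 j1).
rewrite form_brk (@d1_form10 _ (A 0 j2)); first last.
- rewrite mxE mxDE -[B10 R]mul1mx mulmx_B10_ix6 mulmx_B01_ix6 mxE /=.
  by rewrite mulr0n mul0r oppr0 add0r.
- by rewrite mxE mxDE -[B10 R]mul1mx mulmx_B10_ix5 mulmx_B01_ix5 mxE /= mulr0n add0r.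
rewrite wedge_apply -!scalemxAl !mxZE om1_row_B10 om2_row_B01 !mul_row_col B10V B01V.
rewrite !mxE /= mulr1n mulr0n => brk0.
have : (2%:R * 2%:R) * (A 0 j2 * A 0 j2) = 0 :> C by rewrite -brk0; ring.
by move/eqP; rewrite !mulf_eq0 (negPf two_neq0) /= orbb => /eqP.
Qed.

Lemma deformed_J1_entry (J : 'M[R]_6) (T : 'M[C]_(3, 6)) :
  is_complex_structure J -> (T <= B10 R)%MS ->
  (forall a, is_form10 J a = (a <= (B10 R + conjf T)%R)%MS) -> T 0 ix5 = 0.
Proof.
move=> cs T10 forms.
have /submxP[A conjT] : (conjf T <= B01 R)%MS by rewrite map_submx.
rewrite conjT in forms.
by rewrite -[T]conjfK conjT mxE mulmx_B01_ix5 (deformed_J1_coeff cs forms) rmorph0.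
Qed.

Lemma not_tangent_theta0 : ~ tangent_at_J1 (theta0 R).
Proof.
case=> eps [J [tau [sigma [[eps_gt0 _ tau10 dtau] [path sigma_theta]]]]].
have tau_ix5 t : `|t| < eps -> complex.Re (tau 0 t 0 ix5) = 0.
  move=> t_small; have [cs forms] := path t t_small.
  have T10 : (\matrix_(i < 3) tau i t <= B10 R)%MS.
    by apply/row_subP => i; rewrite rowK; exact: tau10.
  have -> : tau 0 t 0 ix5 = (\matrix_(i < 3) tau i t) 0 ix5 by rewrite mxE.
  rewrite (deformed_J1_entry cs T10) // => a; rewrite forms.
  by congr (a <= _)%MS; apply/matrixP => i k; rewrite !mxE.
have [dRe _] := dtau 0 ix5.
have := is_derive_locally0 eps_gt0 tau_ix5 dRe.
have : conjf (sigma 0) 0 ix5 = 1 by rewrite sigma_theta; exact: om3_ix5.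
rewrite mxE => /(congr1 conjc); rewrite conjcK rmorph1 => ->.
by move/eqP; rewrite oner_eq0.
Qed.

End ComplexStructureJ1.

Theorem lemma4p3 (R : realType) :
  (forall a : 'rV[R[i]]_6, (a <= B10 R)%MS -> dbar_hom (theta0 R) a = 0) /\
  ~ tangent_at_J1 (theta0 R).
Proof. exact: conj (@dbar_hom_theta0 R) (@not_tangent_theta0 R). Qed.
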